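(* For every $k\in\mathbb N$, the $k$-th standard Fibonacci-like partition of the first kind $\mathfrak P_k$ is a partition of $\mathbb N$ into exactly $F(k)$ parts. Explicitly: $\mathfrak P_1=\mathfrak P_2=\{\mathbb N\}$, and for $k\geq 3$, with $i=k-3$, the $F(k)$ sets $$R_{i,0},R_{i,1},\ldots,R_{i,F(i+2)-1},\ R_{i+1,0},R_{i+1,1},\ldots,R_{i+1,F(i+1)-1}$$ are pairwise disjoint and their union is $\mathbb N$.
   Context: $\mathbb N=\{1,2,\dots\}$. $\varphi=\frac{1+\sqrt5}{2}$; $a(n)=\lfloor n\varphi\rfloor$ for $n\in\mathbb N$. $F$ is the Fibonacci sequence with $F(0)=0$, $F(1)=F(2)=1$, $F(n)=F(n-1)+F(n-2)$. For $i\in\mathbb Z^{\geq 0}$, $j\in\mathbb Z$: $f_{i,j}(n)=F(i+1)a(n)+F(i)n-j$ ($n\in\mathbb N$) and $R_{i,j}=\{f_{i,j}(n)\mid n\in\mathbb N\}$. The $k$-th standard Fibonacci-like partition of the first kind is $\mathfrak P_1=\mathfrak P_2=\{\mathbb N\}$ and, for $k\ge 3$, $\mathfrak P_k=\{R_{i,0},\ldots,R_{i,F(i+2)-1},R_{i+1,0},\ldots,R_{i+1,F(i+1)-1}\}$ with $i=k-3$. *)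

From Stdlib Require Import Reals ZArith Lia.
Open Scope R_scope.

Definition phi : R := (1 + sqrt 5) / 2.

Definition a (n : nat) : Z := Int_part (INR n * phi).

Fixpoint F (n : nat) : nat :=
  match n with
  | O => O
  | S O => 1%nat
  | S ((S m) as p) => (F p + F m)%nat
  end.

Open Scope Z_scope.

Definition f (i : nat) (j : Z) (n : nat) : Z :=
  Z.of_nat (F (i + 1)) * a n + Z.of_nat (F i) * Z.of_nat n - j.

Definition Rset (i : nat) (j : Z) : Z -> Prop :=
  fun z => exists n : nat, (1 <= n)%nat /\ z = f i j n.

Definition Nset : Z -> Prop := fun z => 1 <= z.

(* The m-th part (m < F k) of the k-th standard Fibonacci-like partition of the
   first kind, listed in the order R_{i,0},...,R_{i,F(i+2)-1},R_{i+1,0},...,R_{i+1,F(i+1)-1}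
   with i = k - 3 (for k >= 3); for k = 1, 2 the single part is N. *)
Definition part (k : nat) (m : nat) : Z -> Prop :=
  if (k <=? 2)%nat then Nset
  else let i := (k - 3)%nat in
       if (m <? F (i + 2))%nat then Rset i (Z.of_nat m)
       else Rset (i + 1) (Z.of_nat (m - F (i + 2))).

(* The sets R_(i,j) split as R_(i,j) = R_(i+1, j+F(i+1)) ⊔ R_(i+2, j).  Indeed
   the Wythoff sequences a(m) and a(m) + m partition N (Beatty's theorem for
   phi and phi + 1, whose inverses add up to 1), and the identities
   a(a(m)) = a(m) + m - 1 and a(a(m) + m) = 2 a(m) + m turn f_(i,j)(a(m)) into
   f_(i+1, j+F(i+1))(m) and f_(i,j)(a(m) + m) into f_(i+2, j)(m).  Splitting
   the parts R_(i,j), j < F(i+2), of P_(i+3) in this way and keeping its parts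
   R_(i+1,j), j < F(i+1), yields exactly the parts of P_(i+4); so the theorem
   follows by induction from P_3 = {R_(0,0), R_(1,0)}, which is the Wythoff
   partition itself. *)

From Stdlib Require Import Reals ZArith Lia Psatz.

Open Scope R_scope.

Definition irrational (x : R) : Prop :=
  forall p q : Z, (1 <= q)%Z -> IZR q * x <> IZR p.

Lemma Rlt_mult_inv_l (x y c : R) : 0 < c -> x < y * c -> x * / c < y.
Proof.
  intros Hc H. apply (Rmult_lt_reg_r c); [exact Hc |]. rewrite Rmult_assoc, Rinv_l; lra.
Qed.

Lemma Rlt_mult_inv_r (x y c : R) : 0 < c -> y * c < x -> y < x * / c.
Proof.
  intros Hc H. apply (Rmult_lt_reg_r c); [exact Hc |]. rewrite Rmult_assoc, Rinv_l; lra.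
Qed.

Lemma Int_part_bounds (x : R) : IZR (Int_part x) <= x < IZR (Int_part x) + 1.
Proof. pose proof (base_Int_part x). lra. Qed.

Lemma Int_part_eq (x : R) (k : Z) : IZR k <= x < IZR k + 1 -> Int_part x = k.
Proof. intros Hk. symmetry. apply Int_part_spec. lra. Qed.

Lemma Int_part_mul_lt (x : R) (n : nat) :
  irrational x -> (1 <= n)%nat -> IZR (Int_part (INR n * x)) < INR n * x.
Proof.
  intros Hx Hn. destruct (Int_part_bounds (INR n * x)) as [[Hlt | Heq] _]; [exact Hlt |].
  exfalso. apply (Hx (Int_part (INR n * x)) (Z.of_nat n)); [lia |].
  now rewrite <- INR_IZR_INZ.
Qed.

Lemma multiples_hit_or_skip (x : R) (N : Z) : 0 < x -> irrational x -> (1 <= N)%Z ->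
  (exists m : nat, (1 <= m)%nat /\ Int_part (INR m * x) = N) \/
  (exists c : Z, IZR c * x < IZR N /\ IZR N + 1 < (IZR c + 1) * x).
Proof.
  intros Hx Hirr HN.
  set (c := Int_part (IZR N * / x)).
  assert (Hinv : x * / x = 1) by (apply Rinv_r; lra).
  assert (Hinv_pos : 0 < / x) by (apply Rinv_0_lt_compat; lra).
  apply IZR_le in HN.
  destruct (Int_part_bounds (IZR N * / x)) as [Hc_le Hc_lt]; fold c in Hc_le, Hc_lt.
  assert (Hc0 : (-1 < c)%Z) by (apply lt_IZR; nra).
  assert (Hc_below : IZR c * x < IZR N).
  { destruct (Z.eq_dec c 0) as [-> | Hc1]; [lra |].
    assert (IZR c * x <= IZR N) by nra.
    assert (IZR c * x <> IZR N) by (apply Hirr; lia).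
    lra. }
  assert (Hc_above : IZR N < (IZR c + 1) * x) by nra.
  destruct (Rtotal_order ((IZR c + 1) * x) (IZR N + 1)) as [Hlt | [Heq | Hgt]].
  - left. exists (Z.to_nat (c + 1)). split; [lia |].
    apply Int_part_eq. rewrite INR_IZR_INZ, Z2Nat.id, plus_IZR by lia. lra.
  - exfalso. apply (Hirr (N + 1) (c + 1))%Z; [lia |]. rewrite !plus_IZR. exact Heq.
  - right. now exists c.
Qed.

Section Beatty.

Variables r s : R.
Hypotheses (r_pos : 0 < r) (s_pos : 0 < s) (inv_add : / r + / s = 1).
Hypotheses (r_irrational : irrational r) (s_irrational : irrational s).

Let inv_add_mul (x : R) : x * / r + x * / s = x.
Proof. rewrite <- Rmult_plus_distr_l, inv_add. ring. Qed.

(* Dividing [N < m r < N + 1] by [r], and likewise for [s], and adding gives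
   [N < m + m' < N + 1]. *)
Lemma beatty_disjoint (m m' : nat) : (1 <= m)%nat -> (1 <= m')%nat ->
  Int_part (INR m * r) <> Int_part (INR m' * s).
Proof.
  intros Hm Hm' E.
  pose proof (Int_part_mul_lt r m r_irrational Hm) as Hr_lo.
  pose proof (Int_part_mul_lt s m' s_irrational Hm') as Hs_lo.
  destruct (Int_part_bounds (INR m * r)) as [_ Hr_hi].
  destruct (Int_part_bounds (INR m' * s)) as [_ Hs_hi].
  rewrite <- E in Hs_lo, Hs_hi. set (N := Int_part (INR m * r)) in *.
  apply Rlt_mult_inv_l in Hr_lo, Hs_lo; [| lra ..].
  apply Rlt_mult_inv_r in Hr_hi, Hs_hi; [| lra ..].
  pose proof (inv_add_mul (IZR N)). pose proof (inv_add_mul (IZR N + 1)).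
  assert (Hlo : IZR N < IZR (Z.of_nat m + Z.of_nat m'))
    by (rewrite plus_IZR, <- !INR_IZR_INZ; lra).
  assert (Hhi : IZR (Z.of_nat m + Z.of_nat m') < IZR (N + 1))
    by (rewrite !plus_IZR, <- !INR_IZR_INZ; lra).
  apply lt_IZR in Hlo, Hhi. lia.
Qed.

(* If both sequences skipped [N], at [c] and [c'], then dividing by [r] and [s]
   would give [N - 1 < c + c' < N]. *)
Lemma beatty_cover (N : Z) : (1 <= N)%Z ->
  (exists m : nat, (1 <= m)%nat /\ Int_part (INR m * r) = N) \/
  (exists m : nat, (1 <= m)%nat /\ Int_part (INR m * s) = N).
Proof.
  intros HN.
  destruct (multiples_hit_or_skip r N r_pos r_irrational HN) as [Hr | [c [Hc_lo Hc_hi]]];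
    [now left |].
  destruct (multiples_hit_or_skip s N s_pos s_irrational HN) as [Hs | [c' [Hc'_lo Hc'_hi]]];
    [now right |].
  exfalso.
  apply Rlt_mult_inv_r in Hc_lo, Hc'_lo; [| lra ..].
  apply Rlt_mult_inv_l in Hc_hi, Hc'_hi; [| lra ..].
  pose proof (inv_add_mul (IZR N)). pose proof (inv_add_mul (IZR N + 1)).
  assert (Hlo : IZR (c + c') < IZR N) by (rewrite plus_IZR; lra).
  assert (Hhi : IZR (N - 1) < IZR (c + c')) by (rewrite plus_IZR, minus_IZR; lra).
  apply lt_IZR in Hlo, Hhi. lia.
Qed.

End Beatty.

Lemma phi_sq : phi * phi = phi + 1.
Proof. unfold phi. pose proof (sqrt_sqrt 5 ltac:(lra)). nra. Qed.

Lemma phi_bounds : 1 < phi < 2.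
Proof. unfold phi. pose proof (sqrt_sqrt 5 ltac:(lra)). pose proof (sqrt_pos 5). nra. Qed.

(* Infinite descent: a solution [(k, n)] yields the smaller solution [(n, k - n)]. *)
Lemma golden_quadratic_no_solution (n : Z) : (1 <= n)%Z ->
  forall k : Z, (0 <= k)%Z -> (k * k <> n * k + n * n)%Z.
Proof.
  intros Hn. assert (Hn0 : (0 <= n)%Z) by lia. revert Hn.
  pattern n. apply Z_lt_induction; [| exact Hn0]. clear n Hn0.
  intros n IH Hn k Hk E.
  assert (Hnk : (n < k < 2 * n)%Z) by nia.
  apply (IH (k - n)%Z ltac:(lia) ltac:(lia) n ltac:(lia)). nia.
Qed.

Lemma phi_irrational : irrational phi.
Proof.
  intros p q Hq E.
  pose proof phi_bounds. pose proof (IZR_le _ _ Hq).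
  assert (Hp : (0 <= p)%Z) by (apply le_IZR; nra).
  apply (golden_quadratic_no_solution q Hq p Hp).
  apply eq_IZR. rewrite plus_IZR, !mult_IZR, <- E.
  pose proof phi_sq. nra.
Qed.

Lemma phi_succ_irrational : irrational (phi + 1).
Proof.
  intros p q Hq E. apply (phi_irrational (p - q)%Z q Hq).
  rewrite minus_IZR. lra.
Qed.

Lemma inv_phi_add_inv_phi_succ : / phi + / (phi + 1) = 1.
Proof.
  pose proof phi_bounds.
  transitivity ((2 * phi + 1) / (phi * (phi + 1))); [field; lra |].
  replace (phi * (phi + 1)) with (2 * phi + 1) by (pose proof phi_sq; lra).
  field. lra.
Qed.

Lemma a_bounds (n : nat) : IZR (a n) <= INR n * phi < IZR (a n) + 1.
Proof. apply Int_part_bounds. Qed.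

Lemma a_frac_pos (n : nat) : (1 <= n)%nat -> 0 < INR n * phi - IZR (a n) < 1.
Proof.
  intros Hn. pose proof (Int_part_mul_lt phi n phi_irrational Hn). pose proof (a_bounds n).
  unfold a in *. lra.
Qed.

Lemma a_pos (n : nat) : (1 <= n)%nat -> (1 <= a n)%Z.
Proof.
  intros Hn. pose proof (a_bounds n). pose proof phi_bounds.
  apply le_INR in Hn.
  assert (Ha : 0 < IZR (a n)) by (simpl in Hn; nra).
  apply lt_IZR in Ha. lia.
Qed.

Lemma a_increasing (n1 n2 : nat) : (n1 < n2)%nat -> (a n1 < a n2)%Z.
Proof.
  intros Hn. apply le_INR in Hn. rewrite S_INR in Hn.
  pose proof (a_bounds n1). pose proof (a_bounds n2). pose proof phi_bounds.
  apply lt_IZR. nra.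
Qed.

Lemma a_succ_phi (n : nat) : Int_part (INR n * (phi + 1)) = (a n + Z.of_nat n)%Z.
Proof.
  apply Int_part_eq. pose proof (a_bounds n).
  rewrite plus_IZR, <- INR_IZR_INZ. lra.
Qed.

Lemma wythoff_disjoint (m m' : nat) : (1 <= m)%nat -> (1 <= m')%nat ->
  a m <> (a m' + Z.of_nat m')%Z.
Proof.
  intros Hm Hm'. pose proof phi_bounds. rewrite <- a_succ_phi.
  apply beatty_disjoint; auto using phi_irrational, phi_succ_irrational,
    inv_phi_add_inv_phi_succ; lra.
Qed.

Lemma wythoff_cover (N : Z) : (1 <= N)%Z ->
  (exists m : nat, (1 <= m)%nat /\ a m = N) \/
  (exists m : nat, (1 <= m)%nat /\ (a m + Z.of_nat m)%Z = N).
Proof.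
  intros HN. pose proof phi_bounds.
  destruct (beatty_cover phi (phi + 1) ltac:(lra) ltac:(lra) inv_phi_add_inv_phi_succ
    phi_irrational phi_succ_irrational N HN) as [Hl | [m Hm]]; [now left |].
  right. exists m. now rewrite <- a_succ_phi.
Qed.

(* With [t := m phi - a m] in [(0, 1)] and [phi^2 = phi + 1],
   [a m * phi = a m + m - t (phi - 1)]. *)
Lemma a_of_a (m n : nat) : (1 <= m)%nat -> Z.of_nat n = a m ->
  a n = (a m + Z.of_nat m - 1)%Z.
Proof.
  intros Hm E. apply Int_part_eq.
  rewrite INR_IZR_INZ, E, minus_IZR, plus_IZR, <- INR_IZR_INZ.
  pose proof (a_frac_pos m Hm). pose proof phi_bounds.
  pose proof (f_equal (Rmult (INR m)) phi_sq).
  set (t := INR m * phi - IZR (a m)) in *.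
  assert (IZR (a m) * phi = IZR (a m) + INR m - t * (phi - 1)) by (unfold t; lra).
  assert (0 < t * (phi - 1) < 1) by nra.
  lra.
Qed.

(* Same [t]: [(a m + m) * phi = 2 a m + m + t (2 - phi)]. *)
Lemma a_of_a_add (m n : nat) : (1 <= m)%nat -> Z.of_nat n = (a m + Z.of_nat m)%Z ->
  a n = (2 * a m + Z.of_nat m)%Z.
Proof.
  intros Hm E. apply Int_part_eq.
  rewrite INR_IZR_INZ, E, plus_IZR, mult_IZR, plus_IZR, <- INR_IZR_INZ.
  pose proof (a_frac_pos m Hm). pose proof phi_bounds.
  pose proof (f_equal (Rmult (INR m)) phi_sq).
  set (t := INR m * phi - IZR (a m)) in *.
  assert ((IZR (a m) + INR m) * phi = 2 * IZR (a m) + INR m + t * (2 - phi))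
    by (unfold t; lra).
  assert (0 < t * (2 - phi) < 1) by nra.
  lra.
Qed.

Open Scope Z_scope.

Lemma F_rec (n : nat) : F (n + 2) = (F (n + 1) + F n)%nat.
Proof. rewrite !(Nat.add_comm n). reflexivity. Qed.

Lemma F_succ_pos (n : nat) : (1 <= F (n + 1))%nat.
Proof.
  induction n as [| n IH]; [simpl; lia |].
  replace (S n + 1)%nat with (n + 2)%nat by lia. rewrite F_rec. lia.
Qed.

Lemma f_at_lower_wythoff (i : nat) (j : Z) (m n : nat) : (1 <= m)%nat -> Z.of_nat n = a m ->
  f i j n = f (i + 1) (j + Z.of_nat (F (i + 1))) m.
Proof.
  intros Hm E. unfold f. rewrite (a_of_a m n Hm E), E.
  replace (i + 1 + 1)%nat with (i + 2)%nat by lia. rewrite F_rec, Nat2Z.inj_add. ring.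
Qed.

Lemma f_at_upper_wythoff (i : nat) (j : Z) (m n : nat) : (1 <= m)%nat ->
  Z.of_nat n = a m + Z.of_nat m -> f i j n = f (i + 2) j m.
Proof.
  intros Hm E. unfold f. rewrite (a_of_a_add m n Hm E), E.
  replace (i + 2 + 1)%nat with (i + 1 + 2)%nat by lia.
  rewrite (F_rec (i + 1)), F_rec.
  replace (i + 1 + 1)%nat with (i + 2)%nat by lia. rewrite F_rec, !Nat2Z.inj_add. ring.
Qed.

Lemma f_increasing (i : nat) (j : Z) (n1 n2 : nat) : (n1 < n2)%nat -> f i j n1 < f i j n2.
Proof.
  intros Hn. unfold f. pose proof (a_increasing n1 n2 Hn). pose proof (F_succ_pos i). nia.
Qed.

Lemma f_inj (i : nat) (j : Z) (n1 n2 : nat) : f i j n1 = f i j n2 -> n1 = n2.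
Proof.
  intros E. destruct (Nat.lt_total n1 n2) as [H | [H | H]]; [| exact H |];
    apply (f_increasing i j) in H; lia.
Qed.

Lemma Rset_nonempty (i : nat) (j : Z) : Rset i j (f i j 1).
Proof. now exists 1%nat. Qed.

Lemma Rset_split (i : nat) (j z : Z) :
  Rset i j z <-> Rset (i + 1) (j + Z.of_nat (F (i + 1))) z \/ Rset (i + 2) j z.
Proof.
  split.
  - intros [n [Hn ->]].
    destruct (wythoff_cover (Z.of_nat n) ltac:(lia)) as [[m [Hm E]] | [m [Hm E]]].
    + left. exists m. split; [exact Hm |]. apply f_at_lower_wythoff; auto.
    + right. exists m. split; [exact Hm |]. apply f_at_upper_wythoff; auto.
  - intros [[m [Hm ->]] | [m [Hm ->]]]; pose proof (a_pos m Hm).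
    + exists (Z.to_nat (a m)). split; [lia |].
      symmetry. apply f_at_lower_wythoff; [exact Hm | lia].
    + exists (Z.to_nat (a m + Z.of_nat m)). split; [lia |].
      symmetry. apply f_at_upper_wythoff; [exact Hm | lia].
Qed.

Lemma Rset_split_disjoint (i : nat) (j z : Z) :
  Rset (i + 1) (j + Z.of_nat (F (i + 1))) z -> Rset (i + 2) j z -> False.
Proof.
  intros [m [Hm ->]] [m' [Hm' E]].
  pose proof (a_pos m Hm). pose proof (a_pos m' Hm').
  rewrite <- (f_at_lower_wythoff i j m (Z.to_nat (a m))) in E by (auto; lia).
  rewrite <- (f_at_upper_wythoff i j m' (Z.to_nat (a m' + Z.of_nat m'))) in E by (auto; lia).
  apply f_inj in E. apply (wythoff_disjoint m m' Hm Hm'). lia.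
Qed.

Definition is_partition {T : Type} (n : nat) (P : nat -> T -> Prop) (U : T -> Prop) : Prop :=
  (forall m : nat, (m < n)%nat -> exists z : T, P m z) /\
  (forall m1 m2 : nat, (m1 < n)%nat -> (m2 < n)%nat -> m1 <> m2 ->
     forall z : T, P m1 z -> P m2 z -> False) /\
  (forall z : T, (exists m : nat, (m < n)%nat /\ P m z) <-> U z).

Lemma is_partition_one {T : Type} (U : T -> Prop) (z0 : T) : U z0 ->
  is_partition 1 (fun _ => U) U.
Proof.
  intros Hz0. split; [| split].
  - intros m _. now exists z0.
  - intros m1 m2 H1 H2 Hne. lia.
  - intros z. split; [now intros [m [_ Hz]] | intros Hz; exists 0%nat; auto].
Qed.

Lemma is_partition_refine {T : Type} (n n' : nat) (Q P : nat -> T -> Prop)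
    (U : T -> Prop) (g : nat -> nat) :
  is_partition n Q U ->
  (forall m, (m < n')%nat -> exists z, P m z) ->
  (forall m, (m < n')%nat -> (g m < n)%nat /\ forall z, P m z -> Q (g m) z) ->
  (forall m' z, (m' < n)%nat -> Q m' z -> exists m, (m < n')%nat /\ g m = m' /\ P m z) ->
  (forall m1 m2, (m1 < n')%nat -> (m2 < n')%nat -> m1 <> m2 -> g m1 = g m2 ->
     forall z, P m1 z -> P m2 z -> False) ->
  is_partition n' P U.
Proof.
  intros [_ [Q_disj Q_cover]] P_ne P_sub P_cover P_disj. split; [exact P_ne | split].
  - intros m1 m2 H1 H2 Hne z Hz1 Hz2.
    destruct (Nat.eq_dec (g m1) (g m2)) as [E | E];
      [now apply (P_disj m1 m2 H1 H2 Hne E z) |].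
    destruct (P_sub m1 H1) as [Hg1 Hsub1]. destruct (P_sub m2 H2) as [Hg2 Hsub2].
    exact (Q_disj _ _ Hg1 Hg2 E z (Hsub1 z Hz1) (Hsub2 z Hz2)).
  - intros z. rewrite <- Q_cover. split.
    + intros [m [Hm Hz]]. destruct (P_sub m Hm) as [Hg Hsub]. exists (g m). auto.
    + intros [m' [Hm' Hz]]. destruct (P_cover m' z Hm' Hz) as [m [Hm [_ HPz]]]. eauto.
Qed.

Lemma part_nonempty (k m : nat) : exists z : Z, part k m z.
Proof.
  unfold part. destruct (k <=? 2)%nat; [now exists 1 |].
  destruct (m <? F (k - 3 + 2))%nat; eexists; apply Rset_nonempty.
Qed.

Lemma part_eq_Rset (i m : nat) : part (i + 3) m =
  if (m <? F (i + 2))%nat then Rset i (Z.of_nat m)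
  else Rset (i + 1) (Z.of_nat (m - F (i + 2))).
Proof.
  unfold part. replace (i + 3 <=? 2)%nat with false by (symmetry; apply Nat.leb_gt; lia).
  now replace (i + 3 - 3)%nat with i by lia.
Qed.

Lemma part_three_partition : is_partition (F 3) (part 3) Nset.
Proof.
  assert (Hlower : forall z, part 3 0 z <-> exists n, (1 <= n)%nat /\ a n = z).
  { intros z. change (part 3 0) with (Rset 0 0). unfold Rset, f. simpl F.
    split; intros [n [Hn E]]; exists n; split; auto; lia. }
  assert (Hupper : forall z, part 3 1 z <-> exists n, (1 <= n)%nat /\ a n + Z.of_nat n = z).
  { intros z. change (part 3 1) with (Rset 1 0). unfold Rset, f. simpl F.
    split; intros [n [Hn E]]; exists n; split; auto; lia. }
  simpl F. split; [| split].
  - intros m _. apply part_nonempty.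
  - intros m1 m2 H1 H2 Hne z.
    assert (Hdisj : part 3 0 z -> part 3 1 z -> False).
    { rewrite Hlower, Hupper. intros [n [Hn <-]] [n' [Hn' E]].
      exact (wythoff_disjoint n n' Hn Hn' (eq_sym E)). }
    destruct m1 as [| [|]], m2 as [| [|]]; try lia; eauto.
  - intros z. split.
    + intros [[| [|]] [Hm Hz]]; [| | lia].
      * apply Hlower in Hz. destruct Hz as [n [Hn <-]]. exact (a_pos n Hn).
      * apply Hupper in Hz. destruct Hz as [n [Hn <-]]. pose proof (a_pos n Hn). red. lia.
    + intros Hz. destruct (wythoff_cover z Hz) as [Hl | Hu].
      * exists 0%nat. split; [lia |]. now apply Hlower.
      * exists 1%nat. split; [lia |]. now apply Hupper.
Qed.

Section Step.

Variable i : nat.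

Let F_i3 : F (i + 3) = (F (i + 2) + F (i + 1))%nat.
Proof.
  replace (i + 3)%nat with (i + 1 + 2)%nat by lia. now rewrite F_rec, <- Nat.add_assoc.
Qed.

Let F_i4 : F (i + 4) = (F (i + 3) + F (i + 2))%nat.
Proof.
  replace (i + 4)%nat with (i + 2 + 2)%nat by lia. now rewrite F_rec, <- !Nat.add_assoc.
Qed.

Lemma part_succ_eq_Rset (m : nat) : part (i + 4) m =
  if (m <? F (i + 3))%nat then Rset (i + 1) (Z.of_nat m)
  else Rset (i + 2) (Z.of_nat (m - F (i + 3))).
Proof.
  replace (i + 4)%nat with (i + 1 + 3)%nat by lia. rewrite part_eq_Rset.
  now rewrite <- !Nat.add_assoc.
Qed.

(* The part of [P_(i+3)] containing the [m]-th part of [P_(i+4)]: for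
   [m < F (i+1)], [R_(i+1,m)] is itself a part of [P_(i+3)]; the other parts
   are [R_(i+1,j+F(i+1))] and [R_(i+2,j)], which split [R_(i,j)]. *)
Definition parent_index (m : nat) : nat :=
  if (m <? F (i + 1))%nat then (F (i + 2) + m)%nat
  else if (m <? F (i + 3))%nat then (m - F (i + 1))%nat
  else (m - F (i + 3))%nat.

Lemma part_succ_sub (m : nat) : (m < F (i + 4))%nat ->
  (parent_index m < F (i + 3))%nat /\
  forall z, part (i + 4) m z -> part (i + 3) (parent_index m) z.
Proof.
  intros Hm. rewrite part_succ_eq_Rset. unfold parent_index.
  destruct (Nat.ltb_spec m (F (i + 1))), (Nat.ltb_spec m (F (i + 3))); try lia;
    split; try lia; intros z Hz; rewrite part_eq_Rset.
  - destruct (Nat.ltb_spec (F (i + 2) + m) (F (i + 2))); [lia |].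
    now replace (F (i + 2) + m - F (i + 2))%nat with m by lia.
  - destruct (Nat.ltb_spec (m - F (i + 1)) (F (i + 2))); [| lia].
    apply Rset_split. left.
    now replace (Z.of_nat (m - F (i + 1)) + Z.of_nat (F (i + 1))) with (Z.of_nat m) by lia.
  - destruct (Nat.ltb_spec (m - F (i + 3)) (F (i + 2))); [| lia].
    apply Rset_split. now right.
Qed.

Lemma part_succ_cover (m' : nat) (z : Z) : (m' < F (i + 3))%nat -> part (i + 3) m' z ->
  exists m, (m < F (i + 4))%nat /\ parent_index m = m' /\ part (i + 4) m z.
Proof.
  intros Hm'. rewrite part_eq_Rset.
  destruct (Nat.ltb_spec m' (F (i + 2))) as [Hlt | Hge]; intros Hz.
  - apply Rset_split in Hz. destruct Hz as [Hz | Hz].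
    + exists (m' + F (i + 1))%nat. rewrite part_succ_eq_Rset. unfold parent_index.
      destruct (Nat.ltb_spec (m' + F (i + 1)) (F (i + 1))),
        (Nat.ltb_spec (m' + F (i + 1)) (F (i + 3))); try lia.
      repeat split; try lia. now rewrite Nat2Z.inj_add.
    + exists (m' + F (i + 3))%nat. rewrite part_succ_eq_Rset. unfold parent_index.
      destruct (Nat.ltb_spec (m' + F (i + 3)) (F (i + 1))),
        (Nat.ltb_spec (m' + F (i + 3)) (F (i + 3))); try lia.
      repeat split; try lia. now replace (m' + F (i + 3) - F (i + 3))%nat with m' by lia.
  - exists (m' - F (i + 2))%nat. rewrite part_succ_eq_Rset. unfold parent_index.
    destruct (Nat.ltb_spec (m' - F (i + 2)) (F (i + 1))),
      (Nat.ltb_spec (m' - F (i + 2)) (F (i + 3))); try lia.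
    repeat split; try lia. exact Hz.
Qed.

Lemma part_succ_siblings_disjoint (m1 m2 : nat) :
  (m1 < F (i + 4))%nat -> (m2 < F (i + 4))%nat -> m1 <> m2 ->
  parent_index m1 = parent_index m2 ->
  forall z, part (i + 4) m1 z -> part (i + 4) m2 z -> False.
Proof.
  intros H1 H2 Hne Hg z. rewrite !part_succ_eq_Rset. unfold parent_index in Hg.
  destruct (Nat.ltb_spec m1 (F (i + 1))), (Nat.ltb_spec m1 (F (i + 3))),
    (Nat.ltb_spec m2 (F (i + 1))), (Nat.ltb_spec m2 (F (i + 3))); try lia;
    intros Hz1 Hz2.
  - apply (Rset_split_disjoint i (Z.of_nat (m2 - F (i + 3))) z); [| exact Hz2].
    now replace (Z.of_nat (m2 - F (i + 3)) + Z.of_nat (F (i + 1))) with (Z.of_nat m1) by lia.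
  - apply (Rset_split_disjoint i (Z.of_nat (m1 - F (i + 3))) z); [| exact Hz1].
    now replace (Z.of_nat (m1 - F (i + 3)) + Z.of_nat (F (i + 1))) with (Z.of_nat m2) by lia.
Qed.

Lemma part_succ_partition :
  is_partition (F (i + 3)) (part (i + 3)) Nset -> is_partition (F (i + 4)) (part (i + 4)) Nset.
Proof.
  intros HP. apply (is_partition_refine _ _ _ _ _ parent_index HP).
  - intros m _. apply part_nonempty.
  - exact part_succ_sub.
  - exact part_succ_cover.
  - exact part_succ_siblings_disjoint.
Qed.

End Step.

Lemma part_partition_large (i : nat) : is_partition (F (i + 3)) (part (i + 3)) Nset.
Proof.
  induction i as [| i IH]; [exact part_three_partition |].
  replace (S i + 3)%nat with (i + 4)%nat by lia. now apply part_succ_partition.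
Qed.

Theorem theorem3p2 (k : nat) (hk : (1 <= k)%nat) :
  (forall m : nat, (m < F k)%nat -> exists z : Z, part k m z) /\
  (forall m1 m2 : nat, (m1 < F k)%nat -> (m2 < F k)%nat -> m1 <> m2 ->
     forall z : Z, part k m1 z -> part k m2 z -> False) /\
  (forall z : Z, (exists m : nat, (m < F k)%nat /\ part k m z) <-> Nset z).
Proof.
  change (is_partition (F k) (part k) Nset).
  destruct (Nat.le_gt_cases k 2) as [Hk | Hk].
  - replace (F k) with 1%nat by (destruct k as [| [| [|]]]; simpl; lia).
    unfold part. rewrite (proj2 (Nat.leb_le k 2) Hk).
    apply (is_partition_one Nset 1). red. lia.
  - replace k with (k - 3 + 3)%nat by lia. apply part_partition_large.
Qed.
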